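(* Let $K$ be a finite field of characteristic $p$ and let $d$ be an integer with $\gcd(d,|K|-1)=1$ that is nondegenerate over $K$. Then there exist $a,b\in K^\times$ with $W_{K,d}(a)>0$ and $W_{K,d}(b)<0$.
   Context: $\psi_K(x)=\exp(2\pi i\,\mathrm{Tr}_{K/\mathbb{F}_p}(x)/p)$ is the canonical additive character of $K$, and for $a\in K$ the Weil sum is $W_{K,d}(a)=\sum_{x\in K}\psi_K(x^d+ax)$; these values are real numbers. $d$ is degenerate over $K$ if $d\equiv p^j\pmod{|K|-1}$ for some integer $j$, and nondegenerate otherwise. *)

From HB Require Import structures.
From mathcomp Require Import all_boot all_order all_algebra all_field.
From mathcomp Require Import reals trigo.
From mathcomp Require Import complex.
Set Implicit Arguments. Unset Strict Implicit. Unset Printing Implicit Defensive.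
Import Order.TTheory GRing.Theory Num.Theory.
Local Open Scope ring_scope.

Section WeilSum.
Variables (R : realType) (K : finFieldType) (p : nat).

(* |K| = p ^ fdeg, when p is the characteristic of K *)
Definition fdeg : nat := logn p #|K|.

Definition abs_trace (x : K) : K := \sum_(i < fdeg) x ^+ (p ^ i).

(* Tr_{K/F_p}(x) lies in the prime field F_p = {k%:R | k < p};
   trace_nat x is the representative k in {0,..,p-1} *)
Definition trace_nat (x : K) : nat :=
  odflt 0%N (omap val [pick k : 'I_p | (k%:R : K) == abs_trace x]).

Definition psiK (x : K) : R[i] :=
  let t : R := (2 * pi * (trace_nat x)%:R) / p%:R in
  (cos t +i* sin t)%C.

Definition weil_sum (d : nat) (a : K) : R[i] :=
  \sum_(x : K) psiK (x ^+ d + a * x).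

End WeilSum.

Definition degenerate (K : finFieldType) (p d : nat) : Prop :=
  exists j : nat, d = p ^ j %[mod #|K| - 1].

From HB Require Import structures.
From mathcomp Require Import all_boot all_order all_algebra all_field.
From mathcomp Require Import all_fingroup all_solvable.
From mathcomp Require Import reals trigo.
From mathcomp Require Import complex.
From mathcomp Require Import zify ring lra.
Set Implicit Arguments. Unset Strict Implicit. Unset Printing Implicit Defensive.
Import Order.TTheory GRing.Theory Num.Theory.
Local Open Scope ring_scope.

(* Write q = |K| and W(a) = W_{K,d}(a).  Because gcd(d, q - 1) = 1, the map
   x |-> x^d permutes K and commutes with x |-> -x, so W is real, W(0) = 0, and
   orthogonality of the additive characters gives
     sum_a W(a) = q   and   sum_a W(a)^2 = q^2.
   The first identity yields some W(a) > 0 with a != 0.  If no W(b) were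
   negative, the two identities would force W to be concentrated at a single c,
   with W(c) = q; then c != 0 and Tr(x^d + c x) = 0 for all x.  Multiplying by
   x^(q-2) and summing over K, only the exponents divisible by q - 1 survive,
   which gives d p^i = 1 (mod q - 1) for some i, i.e. d is degenerate. *)

Section AbsoluteTrace.
Variables (K : finFieldType) (p : nat).
Hypothesis pcharK : p \in [pchar K].

Local Notation n := (fdeg K p).

Let p_prime : prime p := pcharf_prime pcharK.
Let p_gt0 : (0 < p)%N := prime_gt0 p_prime.

Lemma card_fdeg : #|K| = (p ^ n)%N.
Proof.
have := card_pgroup (abelem_pgroup (fin_ring_pchar_abelem pcharK)).
by rewrite cardsT.
Qed.

Lemma fdeg_gt0 : (0 < n)%N.
Proof.
by rewrite lt0n; apply: contraTneq (finNzRing_gt1 K) => n0; rewrite card_fdeg n0.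
Qed.

Lemma exprDpX i (x y : K) : (x + y) ^+ (p ^ i) = x ^+ (p ^ i) + y ^+ (p ^ i).
Proof. by apply: exprDn_pchar; rewrite pnatX pnatE ?pcharK. Qed.

Lemma exprpX_sum i (I : finType) (F : I -> K) :
  (\sum_(j : I) F j) ^+ (p ^ i) = \sum_j F j ^+ (p ^ i).
Proof.
apply: (big_morph (fun x => x ^+ (p ^ i))); first exact: exprDpX.
by rewrite expr0n expn_eq0 eqn0Ngt p_gt0.
Qed.

Lemma abs_traceD (x y : K) : abs_trace p (x + y) = abs_trace p x + abs_trace p y.
Proof. by rewrite /abs_trace -big_split; apply: eq_bigr => i _; rewrite exprDpX. Qed.

(* Frobenius permutes the conjugates x^(p^i) cyclically, since x^(p^n) = x. *)
Lemma abs_trace_frobenius (x : K) : abs_trace p x ^+ p = abs_trace p x.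
Proof.
rewrite /abs_trace -[X in _ ^+ X](expn1 p) exprpX_sum.
have xpn : x ^+ (p ^ n) = x by rewrite -card_fdeg expf_card.
move: xpn; case: n fdeg_gt0 => // m _ xpn.
rewrite big_ord_recr big_ord_recl /= -!exprM -!expnD addn1 xpn expn0 expr1 addrC.
by congr (_ + _); apply: eq_bigr => i _; rewrite -exprM -expnD addn1.
Qed.

Lemma natr_pchar_inj k l : (k < p)%N -> (l < p)%N -> (k%:R : K) = l%:R -> k = l.
Proof.
wlog kl : k l / (k <= l)%N.
  move=> W kp lp e; case/orP: (leq_total k l) => [/W | /W lk]; first exact.
  exact/esym/lk.
move=> _ lp e; apply/eqP; rewrite eqn_leq kl /=.
have : (p %| l - k)%N by rewrite (dvdn_pcharf pcharK) natrB // e subrr.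
by case: (posnP (l - k)) => [|lk0 /(dvdn_leq lk0)]; lia.
Qed.

Lemma natr_pchar_mod m : ((m %% p)%N%:R : K) = m%:R.
Proof. by rewrite {2}(divn_eq m p) natrD natrM (pcharf0 pcharK) mulr0 add0r. Qed.

(* Otherwise y and the p distinct elements k%:R (k < p) are p + 1 roots of X^p - X. *)
Lemma fixed_frobenius_nat (y : K) : y ^+ p = y -> exists2 k, (k < p)%N & k%:R = y.
Proof.
move=> yp; case: (pickP (fun k : 'I_p => (k%:R : K) == y)) => [k /eqP ek | ny].
  by exists k.
pose s := y :: [seq (k%:R : K) | k <- iota 0 p].
pose P : {poly K} := 'X^p - 'X.
have sizeP : size P = p.+1.
  by rewrite size_polyDl ?size_polyXn // size_polyN size_polyX ltnS prime_gt1.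
suff : (size s < size P)%N.
  by rewrite sizeP /= size_map size_iota ltnn.
apply: max_poly_roots; first by rewrite -size_poly_gt0 sizeP.
- apply/allP => z; rewrite inE => /orP[/eqP -> | /mapP[k _ ->]];
    rewrite rootE !hornerE ?yp ?subrr //.
  by rewrite -(pFrobenius_autE pcharK) rmorph_nat subrr.
- rewrite /= map_inj_in_uniq ?iota_uniq ?andbT; last first.
    by move=> a b; rewrite !mem_iota !add0n => ap bp; apply: natr_pchar_inj.
  apply/mapP => -[k]; rewrite mem_iota add0n => kp ek.
  by move: (ny (Ordinal kp)); rewrite /= ek eqxx.
Qed.

Lemma trace_natP (x : K) :
  (trace_nat p x < p)%N /\ (trace_nat p x)%:R = abs_trace p x.
Proof.
rewrite /trace_nat; case: pickP => [k /eqP ek | nk] /=; first by split.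
have [k kp ek] := fixed_frobenius_nat (abs_trace_frobenius x).
by move: (nk (Ordinal kp)); rewrite /= ek eqxx.
Qed.

Lemma trace_natD (x y : K) :
  trace_nat p (x + y) = ((trace_nat p x + trace_nat p y) %% p)%N.
Proof.
have [xyp exy] := trace_natP (x + y); have [xp ex] := trace_natP x.
have [yp ey] := trace_natP y.
by apply: natr_pchar_inj; rewrite ?ltn_mod // natr_pchar_mod natrD exy ex ey abs_traceD.
Qed.

Lemma trace_nat0 : trace_nat p (0 : K) = 0%N.
Proof.
have [tp te] := trace_natP 0; apply: natr_pchar_inj => //.
by rewrite te /abs_trace big1 // => i _; rewrite expr0n expn_eq0 eqn0Ngt p_gt0.
Qed.

End AbsoluteTrace.

Section PowerSums.
Variables (K : finFieldType) (p : nat).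
Hypothesis pcharK : p \in [pchar K].

Local Notation n := (fdeg K p).
Local Notation N := #|K|.-1.

Let p_prime : prime p := pcharf_prime pcharK.
Let card_gt1 : (1 < #|K|)%N := finNzRing_gt1 K.

Lemma expf_card_pred (x : K) : x != 0 -> x ^+ N = 1.
Proof.
by move=> x0; apply: (mulIf x0); rewrite -exprSr prednK ?mul1r ?expf_card // ltnW.
Qed.

Lemma natr_card_pred : (N%:R : K) = -1.
Proof.
apply/eqP; rewrite -addr_eq0 -[1]/(1%:R) -natrD addn1 prednK ?(ltnW card_gt1) //.
by rewrite (card_fdeg pcharK) natrX (pcharf0 pcharK) expr0n eqn0Ngt fdeg_gt0.
Qed.

(* If N does not divide m, some unit y has y^m != 1, as the N units cannot all
   be roots of X^(m mod N) - 1; reindexing by x |-> y x then scales the sum by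
   y^m. *)
Lemma sum_expr m : (0 < m)%N ->
  \sum_(x : K) x ^+ m = if (N %| m)%N then -1 else 0.
Proof.
move=> m0; case: ifP => Nm.
  rewrite (bigD1 0) //= expr0n eqn0Ngt m0 add0r.
  rewrite (eq_bigr (fun _ => 1)); last first.
    by move=> x x0; rewrite -(divnK Nm) mulnC exprM expf_card_pred // expr1n.
  by rewrite sumr_const cardC1 natr_card_pred.
have [y y0 ym] : exists2 y : K, y != 0 & y ^+ m != 1.
  apply/exists_inP; apply: contraFT (Nm) => /exists_inPn ym1.
  have r0 : (0 < m %% N)%N by rewrite lt0n -/(dvdn N m) Nm.
  suff : (N <= m %% N)%N by rewrite leqNgt ltn_mod; lia.
  rewrite -[X in (X <= _)%N](cardC1 (0 : K)) cardE.
  apply: max_unity_roots => //; last exact: enum_uniq.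
  apply/allP => z; rewrite mem_enum /= => z0; apply/unity_rootP.
  move: (ym1 z z0) => /negbNE /eqP.
  by rewrite {1}(divn_eq m N) exprD mulnC exprM expf_card_pred // expr1n mul1r.
set S := \sum_x x ^+ m.
have SyS : S = y ^+ m * S.
  rewrite {1}/S (reindex_inj (mulfI y0)) mulr_sumr.
  by apply: eq_bigr => x _; rewrite exprMn.
apply/eqP; apply: contraTT ym; rewrite negbK => S0.
by apply/eqP/(mulIf S0); rewrite mul1r -SyS.
Qed.

Lemma sum_abs_trace_monomial (b : K) m : (0 < m)%N ->
  \sum_(x : K) abs_trace p (b * x ^+ m) * x ^+ N.-1 =
  - \sum_(i < n | (N %| m * p ^ i + N.-1)%N) b ^+ (p ^ i).
Proof.
move=> m0; rewrite /abs_trace.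
under eq_bigr do rewrite mulr_suml.
rewrite exchange_big -sumrN [RHS]big_mkcond; apply: eq_bigr => i _.
under eq_bigr do rewrite exprMn -exprM -mulrA -exprD.
rewrite -mulr_sumr sum_expr; last by rewrite addn_gt0 muln_gt0 m0 expn_gt0 prime_gt0.
by case: ifP; rewrite ?mulrN1 ?mulr0 ?oppr0.
Qed.

Lemma sum_abs_trace_linear (c : K) :
  \sum_(x : K) abs_trace p (c * x) * x ^+ N.-1 = - c.
Proof.
have p_gt1 := prime_gt1 p_prime.
have n0 := fdeg_gt0 pcharK.
rewrite (eq_bigr (fun x => abs_trace p (c * x ^+ 1) * x ^+ N.-1)) //.
rewrite sum_abs_trace_monomial // (big_pred1 (Ordinal n0)) ?expr1 // => i.
rewrite mul1n /= -(inj_eq val_inj) /=; apply/idP/eqP => [Ndiv | ->]; last first.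
  by rewrite expn0 (_ : (1 + N.-1 = N)%N) //; lia.
apply/eqP; apply: contraTT Ndiv; rewrite -lt0n => i0.
have pi_gt1 : (1 < p ^ i)%N by rewrite -{1}(expn0 p) ltn_exp2l.
have pi_lt : (p ^ i < #|K|)%N by rewrite (card_fdeg pcharK) ltn_exp2l.
rewrite (_ : (p ^ i + N.-1 = p ^ i - 1 + N)%N); last by lia.
by rewrite dvdn_addl // gtnNdvd ?subn_gt0 // -subn1 ltn_sub2r.
Qed.

Lemma abs_trace_neq0 : exists x : K, abs_trace p x != 0.
Proof.
apply/existsP; apply: contraT; rewrite negb_exists => /forallP tr0.
have := sum_abs_trace_linear 1; rewrite big1 => [/eqP|x _].
  by rewrite eq_sym oppr_eq0 oner_eq0.
by move: (tr0 x); rewrite negbK mul1r => /eqP ->; rewrite mul0r.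
Qed.

(* Summing Tr(x^d + c x) x^(N-1) over K gives -#{i | d p^i = 1 mod N} - c,
   so some d p^i is 1 mod N, and then d = p^(n-i) mod N. *)
Lemma degenerate_of_abs_trace_eq0 d (c : K) : (0 < d)%N -> c != 0 ->
  (forall x, abs_trace p (x ^+ d + c * x) = 0) -> degenerate K p d.
Proof.
move=> d0 c0 tr0.
have p_gt0 := prime_gt0 p_prime.
have : \sum_(x : K) abs_trace p (x ^+ d + c * x) * x ^+ N.-1 = 0.
  by rewrite big1 // => x _; rewrite tr0 mul0r.
under eq_bigr => x _ do rewrite (abs_traceD pcharK) mulrDl -[x ^+ d]mul1r.
rewrite big_split /= sum_abs_trace_linear sum_abs_trace_monomial //.
case: (pickP (fun i : 'I_n => (N %| d * p ^ i + N.-1)%N)) => [i Ndi _ | none]; last first.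
  by rewrite big_pred0 // oppr0 add0r => /eqP; rewrite oppr_eq0 (negbTE c0).
have dpi1 : (d * p ^ i = 1 %[mod N])%N.
  have dpi_gt0 : (0 < d * p ^ i)%N by rewrite muln_gt0 d0 expn_gt0 p_gt0.
  move: Ndi; rewrite (_ : (d * p ^ i + N.-1 = d * p ^ i - 1 + N)%N); last first.
    by move: dpi_gt0 card_gt1; set D := (d * p ^ i)%N; lia.
  by rewrite dvdn_addl // -eqn_mod_dvd // => /eqP.
have pn1 : (p ^ n = 1 %[mod N])%N.
  by rewrite -(card_fdeg pcharK) -{1}(prednK (ltnW card_gt1)) -addn1 modnDl.
exists (n - i)%N; rewrite subn1 -[in LHS](muln1 d) -modnMmr -pn1 modnMmr.
have -> : (p ^ n = p ^ i * p ^ (n - i))%N by rewrite -expnD subnKC // ltnW.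
by rewrite mulnA -modnMml dpi1 modnMml mul1n.
Qed.

End PowerSums.

Section AdditiveCharacter.
Variables (R : realType) (K : finFieldType) (p : nat).
Hypothesis pcharK : p \in [pchar K].

Let p_gt0 : (0 < p)%N := prime_gt0 (pcharf_prime pcharK).

Definition zeta (k : nat) : R[i] :=
  let t := (2 * pi * k%:R) / p%:R in (cos t +i* sin t)%C.

Local Notation psi := (psiK R p).

Lemma psiK_zeta (x : K) : psi x = zeta (trace_nat p x).
Proof. by []. Qed.

Lemma zetaD k l : zeta (k + l) = zeta k * zeta l.
Proof.
rewrite /zeta natrD mulrDr mulrDl cosD sinD.
by apply/eqP; rewrite eq_complex /=; apply/andP; split; apply/eqP; ring.
Qed.

Lemma zeta0 : zeta 0 = 1.
Proof. by rewrite /zeta mulr0 mul0r cos0 sin0. Qed.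

Lemma zeta_mod k : zeta (k %% p) = zeta k.
Proof.
suff zeta_mulp a : zeta (a * p) = 1 by rewrite {2}(divn_eq k p) zetaD zeta_mulp mul1r.
elim: a => [|a IHa]; first by rewrite mul0n zeta0.
rewrite mulSn zetaD IHa mulr1 /zeta mulfK ?pnatr_eq0 -?lt0n //.
by rewrite mulr_natl cos2pi sin2pi.
Qed.

Lemma zeta_mulJ k : zeta k * (zeta k)^*%C = 1.
Proof.
rewrite /zeta /=; set t := _ / _.
by apply/eqP; rewrite eq_complex /= -(cos2Dsin2 t); apply/andP; split; apply/eqP; ring.
Qed.

(* 2 pi k / p lies in (0, 2 pi) when 0 < k < p. *)
Lemma Re_zeta_eq1 k : (k < p)%N -> complex.Re (zeta k) = 1 -> k = 0%N.
Proof.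
move=> kp; apply: contra_eq; rewrite -lt0n => k0 /=.
set h := pi * (k%:R / p%:R) : R.
have -> : 2 * pi * k%:R / p%:R = h *+ 2 by rewrite /h -mulr_natr; ring.
have h_gt0 : 0 < h by rewrite /h mulr_gt0 ?pi_gt0 // divr_gt0 // ltr0n.
have h_ltpi : h < pi.
  by rewrite /h -{2}(mulr1 pi) ltr_pM2l ?pi_gt0 // ltr_pdivrMr ?ltr0n // mul1r ltr_nat.
have sin_h : 0 < sin h by apply: sin_gt0_pi; rewrite h_gt0 h_ltpi.
rewrite cos_mulr2n; apply/eqP => cos2h.
have : sin h ^+ 2 = 0 by rewrite sin2cos2; move: cos2h; rewrite mulr2n; lra.
by move/eqP; rewrite expf_eq0 /= gt_eqF.
Qed.

Lemma abs_trace_eq0_of_Re_psiK (x : K) : complex.Re (psi x) = 1 -> abs_trace p x = 0.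
Proof.
have [tp <-] := trace_natP pcharK x.
by rewrite psiK_zeta => /(Re_zeta_eq1 tp) ->.
Qed.

Lemma psiK_add (x y : K) : psi (x + y) = psi x * psi y.
Proof. by rewrite !psiK_zeta (trace_natD pcharK) zeta_mod zetaD. Qed.

Lemma psiK0 : psi (0 : K) = 1.
Proof. by rewrite psiK_zeta (trace_nat0 pcharK) zeta0. Qed.

Lemma psiKN (x : K) : psi (- x) = (psi x)^*%C.
Proof.
rewrite -[LHS]mulr1 -[X in _ * X](zeta_mulJ (trace_nat p x)) -psiK_zeta mulrA.
by rewrite -psiK_add addNr psiK0 mul1r.
Qed.

Lemma Re_psiK_le1 (x : K) : complex.Re (psi x) <= 1.
Proof. exact: cos_le1. Qed.

Lemma sum_psiK : \sum_(y : K) psi y = 0.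
Proof.
have [x0 trx0] := abs_trace_neq0 pcharK.
set S := \sum_y psi y.
have SxS : S = S * psi x0.
  rewrite {1}/S (reindex_inj (addIr x0)) mulr_suml.
  by apply: eq_bigr => y _; rewrite psiK_add.
apply/eqP; apply: contraTT trx0; rewrite negbK => S0; apply/eqP.
have psi_x0 : psi x0 = 1 by apply: (mulfI S0); rewrite -SxS mulr1.
by apply: abs_trace_eq0_of_Re_psiK; rewrite psi_x0.
Qed.

Lemma sum_psiK_mul (x : K) :
  \sum_(a : K) psi (a * x) = if x == 0 then #|K|%:R else 0.
Proof.
have [->|x0] := eqVneq.
  by under eq_bigr do rewrite mulr0 psiK0; rewrite sumr_const.
by rewrite -[RHS]sum_psiK [RHS](reindex_inj (mulIf x0)).
Qed.

(* A sum of #|K| values with real parts at most 1 reaches #|K| only if each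
   real part is 1. *)
Lemma abs_trace_eq0_of_sum_psiK (f : K -> K) :
  complex.Re (\sum_x psi (f x)) = #|K|%:R -> forall x, abs_trace p (f x) = 0.
Proof.
move=> Re_sum x; apply: abs_trace_eq0_of_Re_psiK.
have : \sum_y (1 - complex.Re (psi (f y))) = 0.
  by move: Re_sum; rewrite raddf_sum sumrB => ->; rewrite sumr_const subrr.
have ge0 y : true -> 0 <= 1 - complex.Re (psi (f y)).
  by rewrite subr_ge0 Re_psiK_le1.
by move/(psumr_eq0P ge0)/(_ x isT)/subr0_eq/esym.
Qed.

End AdditiveCharacter.

Lemma sum_sqr_eq_sqr_sum_concentrated (R : realDomainType) (I : finType) (w : I -> R) :
  (forall i, 0 <= w i) -> 0 < \sum_i w i ->
  \sum_i w i ^+ 2 = (\sum_i w i) ^+ 2 -> exists i, w i = \sum_j w j.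
Proof.
move=> w_ge0 S_gt0 sum_sqr; set S := \sum_j w j in S_gt0 sum_sqr *.
have w_leS i : w i <= S by rewrite /S (bigD1 i) //= lerDl sumr_ge0.
have : \sum_i w i * (S - w i) = 0.
  under eq_bigr do rewrite mulrBr -expr2.
  by rewrite sumrB -mulr_suml sum_sqr expr2 subrr.
have ge0 i : true -> 0 <= w i * (S - w i) by rewrite mulr_ge0 ?subr_ge0.
move/(psumr_eq0P ge0) => w_or_S.
case: (pickP (fun i => w i == S)) => [i /eqP | wS]; first by exists i.
suff S0 : S = 0 by rewrite S0 ltxx in S_gt0.
apply: big1 => i _; have /eqP := w_or_S i isT.
by rewrite mulf_eq0 subr_eq0 [S == _]eq_sym wS orbF => /eqP.
Qed.

Section WeilSums.
Variables (R : realType) (K : finFieldType) (p d : nat).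
Hypotheses (pcharK : p \in [pchar K]) (coprime_d : coprime d (#|K| - 1)).
Hypothesis d_gt0 : (0 < d)%N.

Local Notation W := (weil_sum R p d).
Local Notation psi := (psiK R p).

Let card_gt1 : (1 < #|K|)%N := finNzRing_gt1 K.

(* In odd characteristic #|K| - 1 is even, so d is odd. *)
Lemma exprN_coprime (x : K) : (- x) ^+ d = - x ^+ d.
Proof.
have [p2 | p_odd] := even_prime (pcharf_prime pcharK).
  have pchar2 : (2 \in [pchar K])%N by rewrite -p2.
  by rewrite !(oppr_pchar2 pchar2).
have card_odd : odd #|K| by rewrite (card_fdeg pcharK) oddX p_odd orbT.
suff d_odd : odd d by rewrite exprNn -signr_odd d_odd mulN1r.
apply: contraLR coprime_d => d_even; apply/negP => /eqP g1.
have : (2 %| gcdn d (#|K| - 1))%N.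
  by rewrite dvdn_gcd !dvdn2 d_even oddB ?card_odd //; lia.
by rewrite g1.
Qed.

Lemma expr_coprime_inj : injective (fun x : K => x ^+ d).
Proof.
have [u v uv _] := egcdnP (#|K| - 1) d_gt0.
move: coprime_d; rewrite /coprime => /eqP g1; rewrite g1 in uv.
apply: (can_inj (g := fun y : K => y ^+ u)) => x /=.
rewrite -exprM mulnC uv; have [->|x0] := eqVneq x 0; first by rewrite expr0n addn1.
by rewrite exprD mulnC exprM subn1 (expf_card_pred x0) expr1n mul1r.
Qed.

Lemma weil_sum0 : W (0 : K) = 0.
Proof.
rewrite /weil_sum; under eq_bigr do rewrite mul0r addr0.
by rewrite -[RHS](sum_psiK R pcharK) [RHS](reindex_inj expr_coprime_inj).
Qed.

Lemma Im_weil_sum (a : K) : complex.Im (W a) = 0.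
Proof.
have WJ : (W a)^*%C = W a.
  rewrite /weil_sum raddf_sum (reindex_inj oppr_inj); apply: eq_bigr => x _.
  by rewrite exprN_coprime mulrN -opprD (psiKN R pcharK); apply: conjcK.
have : complex.Im (W a)^*%C = complex.Im (W a) by rewrite WJ.
by case: (W a) => ? ? /=; lra.
Qed.

Lemma weil_sum_real (a : K) : W a = (complex.Re (W a))%:C%C.
Proof. by move: (Im_weil_sum a); case: (W a) => ? ? /= ->. Qed.

Lemma sum_weil_sum : \sum_(a : K) W a = #|K|%:R.
Proof.
rewrite /weil_sum exchange_big /=.
rewrite (eq_bigr (fun x => psi (x ^+ d) * (if x == 0 then #|K|%:R else 0))); last first.
  move=> x _; rewrite -(sum_psiK_mul R pcharK) mulr_sumr.
  by apply: eq_bigr => a _; rewrite (psiK_add R pcharK).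
rewrite (bigD1 0) //= eqxx expr0n eqn0Ngt d_gt0 (psiK0 R pcharK) mul1r big1 ?addr0 //.
by move=> x /negbTE ->; rewrite mulr0.
Qed.

(* W(a)^2 = sum_(x,y) psi(x^d + y^d) psi(a (x + y)); orthogonality in a
   leaves y = -x, where x^d + y^d = 0 since d is odd or p = 2. *)
Lemma sum_weil_sum_sqr : \sum_(a : K) W a ^+ 2 = #|K|%:R ^+ 2.
Proof.
have W2 a : W a ^+ 2 =
    \sum_(x : K) \sum_(y : K) psi (x ^+ d + y ^+ d) * psi (a * (x + y)).
  rewrite expr2 /weil_sum mulr_suml; apply: eq_bigr => x _.
  rewrite mulr_sumr; apply: eq_bigr => y _; rewrite -!(psiK_add R pcharK).
  by congr psi; ring.
rewrite (eq_bigr _ (fun a _ => W2 a)) exchange_big /=.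
rewrite (eq_bigr (fun x : K => psi (x ^+ d + (- x) ^+ d) * #|K|%:R)); last first.
  move=> x _; rewrite exchange_big /=.
  under eq_bigr do rewrite -mulr_sumr (sum_psiK_mul R pcharK).
  rewrite (bigD1 (- x)) //= addrN eqxx big1 ?addr0 // => y y_x.
  by rewrite [x + y]addrC addr_eq0 (negbTE y_x) mulr0.
under eq_bigr do rewrite exprN_coprime subrr (psiK0 R pcharK) mul1r.
by rewrite sumr_const expr2 mulr_natr; congr (_ *+ _); exact: eq_card.
Qed.

Lemma sum_Re_weil_sum : \sum_(a : K) complex.Re (W a) = #|K|%:R.
Proof. by rewrite -raddf_sum sum_weil_sum raddfMn. Qed.

Lemma sum_Re_weil_sum_sqr : \sum_(a : K) complex.Re (W a) ^+ 2 = #|K|%:R ^+ 2.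
Proof.
apply: (@complexI R); rewrite rmorph_sum rmorphXn rmorph_nat -sum_weil_sum_sqr.
by apply: eq_bigr => a _; rewrite [in RHS]weil_sum_real rmorphXn.
Qed.

Lemma exists_weil_sum_gt0 : exists2 a : K, a != 0 & 0 < W a.
Proof.
case: (pickP (fun a : K => (a != 0) && (0 < complex.Re (W a)))).
  by move=> a /andP[a0 Wa_gt0]; exists a; rewrite // ltcE Im_weil_sum eqxx.
move=> none.
have : \sum_(a : K) complex.Re (W a) <= 0.
  apply: sumr_le0 => a _; have [->|a0] := eqVneq a 0; first by rewrite weil_sum0.
  by move: (none a); rewrite a0 /= leNgt => ->.
by rewrite sum_Re_weil_sum leNgt ltr0n ltnW.
Qed.

Lemma exists_weil_sum_lt0 : ~ degenerate K p d -> exists2 b : K, b != 0 & W b < 0.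
Proof.
move=> nondeg.
case: (pickP (fun b : K => (b != 0) && (complex.Re (W b) < 0))).
  by move=> b /andP[b0 Wb_lt0]; exists b; rewrite // ltcE Im_weil_sum eqxx.
move=> none.
have Re_ge0 (a : K) : 0 <= complex.Re (W a).
  have [->|a0] := eqVneq a 0; first by rewrite weil_sum0.
  by move: (none a); rewrite a0 /= leNgt => /negbT.
have [c Wc] : exists c : K, complex.Re (W c) = #|K|%:R.
  rewrite -sum_Re_weil_sum; apply: sum_sqr_eq_sqr_sum_concentrated => //.
    by rewrite sum_Re_weil_sum ltr0n ltnW.
  by rewrite sum_Re_weil_sum_sqr sum_Re_weil_sum.
have c0 : c != 0.
  by apply: contra_eq_neq Wc => ->; rewrite weil_sum0 eq_sym pnatr_eq0 -lt0n ltnW.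
case: nondeg; apply: (degenerate_of_abs_trace_eq0 pcharK d_gt0 c0).
exact: (abs_trace_eq0_of_sum_psiK pcharK Wc).
Qed.

End WeilSums.

Theorem corollary2p3 (R : realType) (K : finFieldType) (p : nat) (d : nat)
  (hp : p \in [pchar K])
  (hcop : coprime d (#|K| - 1))
  (hnd : ~ degenerate K p d) :
  exists a b : K, [/\ a != 0, b != 0,
    0 < weil_sum R p d a & weil_sum R p d b < 0].
Proof.
have d_gt0 : (0 < d)%N.
  rewrite lt0n; apply/eqP => d0; apply: hnd; exists 0%N.
  by move: hcop; rewrite d0 /coprime gcd0n => /eqP ->; rewrite !modn1.
have [a a0 Wa_gt0] := exists_weil_sum_gt0 R hp hcop d_gt0.
have [b b0 Wb_lt0] := exists_weil_sum_lt0 R hp hcop d_gt0 hnd.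
by exists a, b.
Qed.
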